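(* Let $s\in\mathbb C$ with $\Re s<0$ and let $w(x)=e^{s/x}$ for $x>0$, $w(0)=0$. Then for every $\sigma>-\Re s$, $\sup_{k\in\mathbb N}\sup_{x\in[0,\infty)}\frac{\sigma^k}{(k!)^2}\Big|\frac{d^k w}{dx^k}(x)\Big|=\infty.$ *)

(* classical reals. A complex number s = a + i b is encoded
   by its real and imaginary parts; complex-valued functions by pairs of
   real-valued functions. *)
From Stdlib Require Import Reals.
Open Scope R_scope.

(* w(x) = e^{s/x} for x > 0, w(0) = 0 (and extended by 0 for x < 0, which
   is irrelevant: only x >= 0 is ever used).  With s = a + i b,
   e^{s/x} = e^{a/x} (cos (b/x) + i sin (b/x)). *)
Definition w_re (a b x : R) : R :=
  if Rlt_dec 0 x then exp (a / x) * cos (b / x) else 0.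
Definition w_im (a b x : R) : R :=
  if Rlt_dec 0 x then exp (a / x) * sin (b / x) else 0.

Definition cmod (u v : R) : R := sqrt (u * u + v * v).

(* l is the derivative at x of f regarded as a function on [0, +oo)
   (one-sided at x = 0, ordinary derivative at x > 0). *)
Definition deriv_nonneg (f : R -> R) (x l : R) : Prop :=
  forall eps : R, 0 < eps -> exists delta : R, 0 < delta /\
    forall h : R, h <> 0 -> Rabs h < delta -> 0 <= x + h ->
      Rabs ((f (x + h) - f x) / h - l) < eps.

From Stdlib Require Import Reals Lra Lia Classical.
From Coquelicot Require Import Coquelicot.
Open Scope R_scope.

(* Suppose the double supremum is at most M, so that the real and imaginary
   parts of w^(k) are bounded by B k = M (k!)^2 / sigma^k on [0, +oo).
   Since |w(x)| = e^(a/x) = o(x^n) for every n, Taylor's formula at 0 with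
   these bounds forces all derivatives to vanish at 0, and then yields
   |w(x)| <= 2 B m x^m / m!.  At x = sigma / m this reads
   e^(a m / sigma) <= 2 M m! / m^m <= 2 e M m e^(-m) by the elementary
   Stirling bound m! e^m <= e m m^m, i.e. e^(m (1 + a/sigma)) <= 2 e M m for
   all m >= 1, which is impossible because 1 + a/sigma > 0. *)

Section OneSidedDerivatives.

Variable g : R -> R.

Lemma deriv_nonneg_continuity_pt (y l : R) :
  0 <= y -> deriv_nonneg g y l -> continuity_pt (fun t => g (Rmax 0 t)) y.
Proof.
  intros Hy Hd.
  unfold continuity_pt, continue_in, limit1_in, limit_in, dist; simpl; unfold R_dist.
  intros eps Heps.
  destruct (Hd 1 Rlt_0_1) as [d [Hd0 Hdd]].
  assert (Hl : 0 < Rabs l + 1) by (pose proof (Rabs_pos l); lra).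
  exists (Rmin d (eps / (Rabs l + 1))). split.
  { apply Rmin_pos; [lra|]. apply Rdiv_lt_0_compat; lra. }
  intros t [_ Ht].
  assert (Hm1 := Rmin_l d (eps / (Rabs l + 1))).
  assert (Hm2 := Rmin_r d (eps / (Rabs l + 1))).
  rewrite (Rmax_right 0 y Hy).
  set (s := Rmax 0 t).
  assert (Hs : Rabs (s - y) <= Rabs (t - y) /\ 0 <= s).
  { unfold s. destruct (Rle_dec t 0).
    - rewrite Rmax_left by lra. split; [|lra].
      rewrite Rabs_left1 by lra. rewrite Rabs_left1 by lra. lra.
    - rewrite Rmax_right by lra. split; lra. }
  destruct Hs as [Hs Hs0].
  destruct (Req_dec s y) as [E|E].
  { rewrite E, Rminus_diag, Rabs_R0. lra. }
  set (h := s - y).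
  assert (Hh : h <> 0) by (unfold h; lra).
  assert (Hq := Hdd h Hh ltac:(unfold h; lra) ltac:(unfold h; lra)).
  replace (y + h) with s in Hq by (unfold h; ring).
  set (q := (g s - g y) / h) in Hq.
  assert (Hq2 : Rabs q <= Rabs l + 1).
  { replace q with ((q - l) + l) by ring. pose proof (Rabs_triang (q - l) l). lra. }
  replace (g s - g y) with (q * h) by (unfold q; field; exact Hh).
  rewrite Rabs_mult.
  apply Rle_lt_trans with ((Rabs l + 1) * Rabs h).
  { apply Rmult_le_compat_r; [apply Rabs_pos|exact Hq2]. }
  apply Rmult_lt_reg_r with (/ (Rabs l + 1)); [apply Rinv_0_lt_compat; lra|].
  replace ((Rabs l + 1) * Rabs h * / (Rabs l + 1)) with (Rabs h) by (field; lra).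
  unfold h; lra.
Qed.

Lemma deriv_nonneg_is_derive (y l : R) :
  0 < y -> deriv_nonneg g y l -> is_derive (fun t => g (Rmax 0 t)) y l.
Proof.
  intros Hy Hd. apply is_derive_Reals. intros eps Heps.
  destruct (Hd eps Heps) as [d [Hd0 Hdd]].
  assert (Hp : 0 < Rmin d y) by (apply Rmin_pos; lra).
  exists (mkposreal _ Hp). intros h Hh Hh2. simpl in Hh2.
  assert (Hm1 := Rmin_l d y). assert (Hm2 := Rmin_r d y).
  assert (0 < y + h) by (destruct (Rabs_def2 h y); lra).
  rewrite (Rmax_right 0 y), (Rmax_right 0 (y + h)) by lra.
  apply Hdd; lra.
Qed.

Lemma is_derive_deriv_nonneg (y l : R) : is_derive g y l -> deriv_nonneg g y l.
Proof.
  intros H. apply is_derive_Reals in H. intros eps Heps.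
  destruct (H eps Heps) as [d Hd].
  exists d. split; [apply cond_pos|]. intros h Hh Hh2 _. apply Hd; auto.
Qed.

End OneSidedDerivatives.

(* Extending f - G by its value at 0 to the left makes the usual mean value
   theorem applicable on [0, x]. *)
Lemma MVT_deriv_nonneg (f f' G G' : R -> R) (x : R) : 0 <= x ->
  (forall y, 0 <= y -> deriv_nonneg f y (f' y)) ->
  (forall y, is_derive G y (G' y)) ->
  exists c, 0 <= c <= x /\ (f x - G x) - (f 0 - G 0) = (f' c - G' c) * x.
Proof.
  intros Hx Hf HG.
  destruct (Req_dec x 0) as [->|Hx0].
  { exists 0. split; [lra|ring]. }
  set (H := fun t => f (Rmax 0 t) - G (Rmax 0 t)).
  destruct (MVT_gen H 0 x (fun t => f' t - G' t)) as [c [Hc Hc2]];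
    rewrite ?Rmin_left, ?Rmax_right in * by lra.
  - intros y Hy. apply (is_derive_minus (fun t => f (Rmax 0 t)) (fun t => G (Rmax 0 t))).
    + apply deriv_nonneg_is_derive; [lra|]. apply Hf; lra.
    + apply deriv_nonneg_is_derive; [lra|]. apply is_derive_deriv_nonneg, HG.
  - intros y Hy. apply (continuity_pt_minus (fun t => f (Rmax 0 t)) (fun t => G (Rmax 0 t))).
    + apply deriv_nonneg_continuity_pt with (f' y); [lra|]. apply Hf; lra.
    + apply deriv_nonneg_continuity_pt with (G' y); [lra|].
      apply is_derive_deriv_nonneg, HG.
  - exists c. split; [exact Hc|].
    unfold H in Hc2. rewrite (Rmax_right 0 x), (Rmax_left 0 0) in Hc2 by lra. lra.
Qed.

Lemma deriv_nonneg_comparison (f f' P P' E E' : R -> R) (x : R) : 0 <= x ->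
  (forall y, 0 <= y -> deriv_nonneg f y (f' y)) ->
  (forall y, is_derive P y (P' y)) -> (forall y, is_derive E y (E' y)) ->
  (forall y, 0 <= y <= x -> Rabs (f' y - P' y) <= E' y) ->
  Rabs (f x - f 0 - (P x - P 0)) <= E x - E 0.
Proof.
  intros Hx Hf HP HE Hb.
  destruct (MVT_deriv_nonneg f f' (fun y => P y + E y) (fun y => P' y + E' y) x Hx Hf)
    as [c1 [Hc1 E1]].
  { intros y. exact (is_derive_plus _ _ _ _ _ (HP y) (HE y)). }
  destruct (MVT_deriv_nonneg f f' (fun y => P y - E y) (fun y => P' y - E' y) x Hx Hf)
    as [c2 [Hc2 E2]].
  { intros y. exact (is_derive_minus _ _ _ _ _ (HP y) (HE y)). }
  assert (C1 := Rle_trans _ _ _ (Rle_abs (f' c1 - P' c1)) (Hb c1 Hc1)).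
  assert (C2 := Rle_trans _ _ _ (Rle_abs (- (f' c2 - P' c2)))
                  (Rle_trans _ _ _ (Req_le _ _ (Rabs_Ropp _)) (Hb c2 Hc2))).
  assert (0 <= (f' c2 - (P' c2 - E' c2)) * x) by (apply Rmult_le_pos; lra).
  assert ((f' c1 - (P' c1 + E' c1)) * x <= 0) by (apply Rmult_le_0_r; lra).
  apply Rabs_le; lra.
Qed.

Lemma deriv_nonneg_lipschitz (f f' : R -> R) (C x : R) : 0 <= x ->
  (forall y, 0 <= y -> deriv_nonneg f y (f' y)) ->
  (forall y, 0 <= y <= x -> Rabs (f' y) <= C) ->
  Rabs (f x - f 0) <= C * x.
Proof.
  intros Hx Hf Hb.
  assert (K := deriv_nonneg_comparison f f' (fun _ => 0) (fun _ => 0)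
                 (fun y => C * y) (fun _ => C) x Hx Hf).
  rewrite Rmult_0_r, !Rminus_0_r in K. apply K.
  - intros y. auto_derive; [exact I|ring].
  - intros y. auto_derive; [exact I|ring].
  - intros y Hy. rewrite Rminus_0_r. auto.
Qed.

Definition pow_fact (i : nat) (y : R) : R := y ^ i / INR (Factorial.fact i).

Lemma is_derive_pow_fact i y : is_derive (pow_fact (S i)) y (pow_fact i y).
Proof.
  unfold pow_fact. auto_derive; [exact I|].
  change (Factorial.fact i + i * Factorial.fact i)%nat with (Factorial.fact (S i)).
  change (match i with 0%nat => 1 | S _ => INR i + 1 end) with (INR (S i)).
  rewrite fact_simpl, mult_INR.
  assert (INR (S i) <> 0) by (apply not_0_INR; lia).
  field. split; [apply INR_fact_neq_0|auto].
Qed.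

Lemma pow_fact_0 y : pow_fact 0 y = 1.
Proof. unfold pow_fact. simpl. field. Qed.

Lemma pow_fact_1 y : pow_fact 1 y = y.
Proof. unfold pow_fact. simpl. field. Qed.

Lemma pow_fact_S_0 i : pow_fact (S i) 0 = 0.
Proof. unfold pow_fact. simpl. unfold Rdiv. ring. Qed.

Lemma pow_fact_ge0 i y : 0 <= y -> 0 <= pow_fact i y.
Proof.
  intros Hy. apply Rdiv_le_0_compat; [apply pow_le; auto|apply INR_fact_lt_0].
Qed.

Lemma pow_fact_le_exp t N : 0 <= t -> pow_fact N t <= exp t.
Proof.
  intros Ht. eapply Rle_trans; [|apply (exp_ge_taylor t N Ht)].
  destruct N as [|N]; [right; reflexivity|].
  rewrite tech5.
  assert (0 <= sum_f_R0 (fun k => t ^ k / INR (Factorial.fact k)) N).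
  { apply cond_pos_sum. intros k. apply pow_fact_ge0; auto. }
  unfold pow_fact. lra.
Qed.

Lemma exp_div_le_pow a N x : a < 0 -> 0 < x ->
  exp (a / x) <= INR (Factorial.fact N) / (- a) ^ N * x ^ N.
Proof.
  intros Ha Hx.
  assert (Hp : 0 < pow_fact N (- a / x)).
  { apply Rdiv_lt_0_compat; [apply pow_lt, Rdiv_lt_0_compat|apply INR_fact_lt_0]; lra. }
  replace (a / x) with (- (- a / x)) by (field; lra).
  rewrite exp_Ropp.
  apply Rle_trans with (/ pow_fact N (- a / x)).
  { apply Rinv_le_contravar; auto. apply pow_fact_le_exp. left; apply Rdiv_lt_0_compat; lra. }
  unfold pow_fact, Rdiv. rewrite Rpow_mult_distr, pow_inv.
  assert (0 < (- a) ^ N) by (apply pow_lt; lra).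
  assert (0 < x ^ N) by (apply pow_lt; lra).
  right. field. repeat split; try lra. apply INR_fact_neq_0.
Qed.

Lemma not_forall_le_linear q D : 0 < q -> ~ (forall x, 0 < x -> q <= D * x).
Proof.
  intros Hq H.
  set (x := q / (2 * (Rabs D + 1))).
  assert (HD : 0 < 2 * (Rabs D + 1)) by (pose proof (Rabs_pos D); lra).
  assert (Hx : 0 < x) by (apply Rdiv_lt_0_compat; lra).
  assert (H1 : D * x <= Rabs D * x) by (apply Rmult_le_compat_r; [lra|apply Rle_abs]).
  assert (H2 : Rabs D * x * (2 * (Rabs D + 1)) = Rabs D * q) by (unfold x; field; lra).
  pose proof (Rabs_pos D). pose proof (H x Hx). nra.
Qed.

Section TaylorAtZero.

Variable F : nat -> R -> R.
Hypothesis F_deriv : forall k x, 0 <= x -> deriv_nonneg (F k) x (F (S k) x).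

Lemma taylor_flat_bound n C :
  (forall j, (j < n)%nat -> F j 0 = 0) ->
  (forall x, 0 <= x -> Rabs (F (S n) x) <= C) ->
  forall x, 0 <= x -> Rabs (F 0 x - F n 0 * pow_fact n x) <= C * pow_fact (S n) x.
Proof.
  intros Hflat HC.
  set (c := F n 0).
  assert (Hi : forall i, (i <= n)%nat -> forall x, 0 <= x ->
            Rabs (F (n - i)%nat x - c * pow_fact i x) <= C * pow_fact (S i) x).
  { induction i as [|i IH]; intros Hi x Hx.
    - rewrite Nat.sub_0_r, pow_fact_0, pow_fact_1, Rmult_1_r.
      apply (deriv_nonneg_lipschitz _ (F (S n))); auto. intros y Hy. apply HC; lra.
    - assert (Hd : forall y, 0 <= y -> deriv_nonneg (F (n - S i)%nat) y (F (n - i)%nat y)).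
      { intros y Hy. replace (n - i)%nat with (S (n - S i)) by lia. auto. }
      assert (K := deriv_nonneg_comparison (F (n - S i)%nat) (F (n - i)%nat)
        (fun y => c * pow_fact (S i) y) (fun y => c * pow_fact i y)
        (fun y => C * pow_fact (S (S i)) y) (fun y => C * pow_fact (S i) y) x Hx Hd).
      rewrite (Hflat (n - S i)%nat) in K by lia.
      rewrite !pow_fact_S_0, !Rmult_0_r, !Rminus_0_r in K.
      apply K; intros y; try (apply is_derive_scal, is_derive_pow_fact).
      intros Hy. apply IH; [lia|lra]. }
  intros x Hx. rewrite <- (Nat.sub_diag n). apply Hi; auto.
Qed.

Variable a : R.
Hypothesis a_neg : a < 0.
Hypothesis F0_small : forall x, 0 < x -> Rabs (F 0 x) <= exp (a / x).
Variable B : nat -> R.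
Hypothesis F_bounded : forall k x, 0 <= x -> Rabs (F k x) <= B k.

(* If c = F n 0 were the first nonzero value at 0, Taylor's formula would give
   |c| x^n / n! <= |F 0 x| + O(x^(n+1)), while |F 0 x| <= exp (a/x) = O(x^(n+1)). *)
Lemma flat_at_0 n : F n 0 = 0.
Proof.
  enough (H : forall m j, (j < m)%nat -> F j 0 = 0)
    by exact (H (S n) n (Nat.lt_succ_diag_r n)).
  induction m as [|m IH]; intros j Hj; [lia|].
  destruct (Nat.eq_dec j m) as [->|Hne]; [|apply IH; lia].
  destruct (Req_dec (F m 0) 0) as [E|Hc]; [exact E|exfalso].
  set (c := F m 0) in *.
  set (C := B (S m)).
  apply (not_forall_le_linear (Rabs c / INR (Factorial.fact m))
           (INR (Factorial.fact (S m)) / (- a) ^ (S m) + C / INR (Factorial.fact (S m)))).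
  { apply Rdiv_lt_0_compat; [apply Rabs_pos_lt; auto|apply INR_fact_lt_0]. }
  intros x Hx.
  assert (Ht := taylor_flat_bound m C IH (fun y Hy => F_bounded (S m) y Hy) x ltac:(lra)).
  assert (Hw := Rle_trans _ _ _ (F0_small x Hx) (exp_div_le_pow a (S m) x a_neg Hx)).
  assert (Htri : Rabs (c * pow_fact m x) <= Rabs (F 0 x) + Rabs (F 0 x - c * pow_fact m x)).
  { rewrite <- (Rabs_Ropp (F 0 x - _)).
    replace (c * pow_fact m x) with (F 0 x + - (F 0 x - c * pow_fact m x)) at 1 by ring.
    apply Rabs_triang. }
  rewrite Rabs_mult, (Rabs_pos_eq (pow_fact m x)) in Htri by (apply pow_fact_ge0; lra).
  assert (Hxm : 0 < x ^ m) by (apply pow_lt; lra).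
  apply Rmult_le_reg_r with (x ^ m); auto.
  replace (Rabs c / INR (Factorial.fact m) * x ^ m) with (Rabs c * pow_fact m x)
    by (unfold pow_fact, Rdiv; ring).
  replace (_ * x * x ^ m) with (INR (Factorial.fact (S m)) / (- a) ^ (S m) * x ^ S m
                                + C * pow_fact (S m) x)
    by (unfold pow_fact, Rdiv; simpl; ring).
  fold c in Ht. lra.
Qed.

Lemma abs_le_pow_fact k x : 0 <= x -> Rabs (F 0 x) <= B (S k) * pow_fact (S k) x.
Proof.
  intros Hx.
  assert (Ht := taylor_flat_bound k (B (S k)) (fun j _ => flat_at_0 j)
                  (fun y Hy => F_bounded (S k) y Hy) x Hx).
  rewrite flat_at_0, Rmult_0_l, Rminus_0_r in Ht. exact Ht.
Qed.

End TaylorAtZero.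

Lemma exp_INR_mul n x : exp (INR n * x) = exp x ^ n.
Proof. rewrite <- Rpower_pow by apply exp_pos. unfold Rpower. rewrite ln_exp. reflexivity. Qed.

(* e <= (1 + 1/k)^(k+1), since 1 - 1/(k+1) <= exp (- 1/(k+1)). *)
Lemma exp1_mul_pow_le k : (1 <= k)%nat -> exp 1 * INR k ^ S k <= INR (S k) ^ S k.
Proof.
  intros Hk. rewrite S_INR.
  set (r := INR k). assert (Hr : 0 < r) by (apply lt_0_INR; lia).
  set (v := / (r + 1)).
  assert (Hv : exp v * r <= r + 1).
  { assert (H1 := exp_ineq1_le (- v)).
    assert (H2 : exp v * exp (- v) = 1) by (rewrite <- exp_plus, Rplus_opp_r; apply exp_0).
    assert (H3 : r = (1 + - v) * (r + 1)) by (unfold v; field; lra).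
    assert (H4 : exp v * (1 + - v) <= 1)
      by (rewrite <- H2 at 2; apply Rmult_le_compat_l; [left; apply exp_pos|exact H1]).
    rewrite H3 at 1. rewrite <- Rmult_assoc.
    apply Rle_trans with (1 * (r + 1)); [apply Rmult_le_compat_r|]; lra. }
  replace (exp 1) with (exp v ^ S k)
    by (rewrite <- exp_INR_mul, S_INR; fold r; f_equal; unfold v; field; lra).
  rewrite <- Rpow_mult_distr. apply pow_incr. pose proof (exp_pos v). nra.
Qed.

Lemma fact_mul_exp_le k : (1 <= k)%nat ->
  INR (Factorial.fact k) * exp (INR k) <= exp 1 * INR k * INR k ^ k.
Proof.
  induction k as [|k IH]; intros Hk; [lia|].
  destruct (Nat.eq_dec k 0) as [->|Hk0]; [simpl; lra|].
  assert (IH' := IH ltac:(lia)).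
  assert (Hs := exp1_mul_pow_le k ltac:(lia)).
  assert (Hr : 0 < INR (S k)) by (apply lt_0_INR; lia).
  rewrite fact_simpl, mult_INR, S_INR, exp_plus, <- S_INR.
  replace (INR (S k) * INR (Factorial.fact k) * (exp (INR k) * exp 1))
    with (INR (S k) * exp 1 * (INR (Factorial.fact k) * exp (INR k))) by ring.
  apply Rle_trans with (INR (S k) * exp 1 * (exp 1 * INR k * INR k ^ k)).
  { apply Rmult_le_compat_l; [pose proof (exp_pos 1); nra|exact IH']. }
  replace (INR (S k) * exp 1 * (exp 1 * INR k * INR k ^ k))
    with (exp 1 * INR (S k) * (exp 1 * INR k ^ S k)) by (simpl; ring).
  apply Rmult_le_compat_l; [pose proof (exp_pos 1); nra|exact Hs].
Qed.

Lemma exp_mul_le_of_fact_bound a sigma M : 0 < sigma ->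
  (forall m, (1 <= m)%nat ->
     exp (a * INR m / sigma) <= M * INR (Factorial.fact m) / INR m ^ m) ->
  forall m, (1 <= m)%nat -> exp (INR m * (1 + a / sigma)) <= M * exp 1 * INR m.
Proof.
  intros Hs H m Hm.
  assert (Hmp : 0 < INR m ^ m) by (apply pow_lt, lt_0_INR; lia).
  assert (Hf := INR_fact_lt_0 m).
  assert (HM : 0 < M).
  { assert (0 < M * INR (Factorial.fact m) / INR m ^ m)
      by exact (Rlt_le_trans _ _ _ (exp_pos _) (H m Hm)).
    apply Rmult_lt_reg_r with (INR (Factorial.fact m) / INR m ^ m);
      [apply Rdiv_lt_0_compat; auto|].
    unfold Rdiv in *. lra. }
  replace (INR m * (1 + a / sigma)) with (INR m + a * INR m / sigma) by (field; lra).
  rewrite exp_plus.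
  apply Rle_trans with (exp (INR m) * (M * INR (Factorial.fact m) / INR m ^ m)).
  { apply Rmult_le_compat_l; [left; apply exp_pos|auto]. }
  apply Rmult_le_reg_r with (INR m ^ m); auto.
  replace (exp (INR m) * (M * INR (Factorial.fact m) / INR m ^ m) * INR m ^ m)
    with (M * (INR (Factorial.fact m) * exp (INR m))) by (field; lra).
  replace (M * exp 1 * INR m * INR m ^ m) with (M * (exp 1 * INR m * INR m ^ m)) by ring.
  apply Rmult_le_compat_l; [lra|]. apply fact_mul_exp_le; auto.
Qed.

Lemma exp_not_linearly_bounded d C : 0 < d ->
  ~ (forall m, (1 <= m)%nat -> exp (INR m * d) <= C * INR m).
Proof.
  intros Hd H.
  destruct (INR_unbounded (2 * C / (d * d))) as [k Hk].
  set (m := S k).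
  assert (Hm : 1 <= INR m) by (unfold m; rewrite S_INR; pose proof (pos_INR k); lra).
  assert (H1 := H m ltac:(unfold m; lia)).
  assert (H2 := pow_fact_le_exp (INR m * d) 2 ltac:(nra)).
  unfold pow_fact in H2. replace (INR (Factorial.fact 2)) with 2 in H2 by (simpl; ring).
  assert (Hk' : 2 * C < INR m * (d * d)).
  { assert (INR k < INR m) by (unfold m; rewrite S_INR; lra).
    assert (E : 2 * C / (d * d) * (d * d) = 2 * C) by (field; lra).
    rewrite <- E. apply Rmult_lt_compat_r; [nra|lra]. }
  assert (2 * C * INR m < INR m * (d * d) * INR m) by (apply Rmult_lt_compat_r; lra).
  replace ((INR m * d) ^ 2 / 2) with (INR m * (d * d) * INR m / 2) in H2 by (simpl; field).
  lra.
Qed.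

Lemma Rabs_le_cmod_l u v : Rabs u <= cmod u v.
Proof.
  unfold cmod. rewrite <- (sqrt_Rsqr (Rabs u)) by apply Rabs_pos.
  apply sqrt_le_1_alt. rewrite <- Rsqr_abs. unfold Rsqr. nra.
Qed.

Lemma Rabs_le_cmod_r u v : Rabs v <= cmod u v.
Proof.
  unfold cmod. rewrite <- (sqrt_Rsqr (Rabs v)) by apply Rabs_pos.
  apply sqrt_le_1_alt. rewrite <- Rsqr_abs. unfold Rsqr. nra.
Qed.

Lemma cmod_le_Rabs_add u v : cmod u v <= Rabs u + Rabs v.
Proof.
  pose proof (Rabs_pos u). pose proof (Rabs_pos v).
  unfold cmod. rewrite <- (sqrt_Rsqr (Rabs u + Rabs v)) by lra.
  apply sqrt_le_1_alt. fold (Rsqr u) (Rsqr v). rewrite (Rsqr_abs u), (Rsqr_abs v).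
  unfold Rsqr. nra.
Qed.

Lemma cmod_w a b x : 0 < x -> cmod (w_re a b x) (w_im a b x) = exp (a / x).
Proof.
  intros Hx. unfold cmod, w_re, w_im. destruct (Rlt_dec 0 x) as [_|]; [|lra].
  replace (_ + _) with (exp (a / x) * exp (a / x) * (Rsqr (sin (b / x)) + Rsqr (cos (b / x))))
    by (unfold Rsqr; ring).
  rewrite sin2_cos2, Rmult_1_r. apply sqrt_square. left; apply exp_pos.
Qed.

Section DerivativesOfW.

Variables (a b sigma M : R) (U V : nat -> R -> R).
Hypothesis a_neg : a < 0.
Hypothesis sigma_pos : 0 < sigma.
Hypothesis UV_0 : forall x, 0 <= x -> U O x = w_re a b x /\ V O x = w_im a b x.
Hypothesis UV_S : forall k x, 0 <= x ->
  deriv_nonneg (U k) x (U (S k) x) /\ deriv_nonneg (V k) x (V (S k) x).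
Hypothesis UV_bounded : forall k x, 0 <= x ->
  sigma ^ k / INR (Factorial.fact k) ^ 2 * cmod (U k x) (V k x) <= M.

Let B (k : nat) : R := M * INR (Factorial.fact k) ^ 2 / sigma ^ k.

Lemma Rabs_U_V_le k y : 0 <= y -> Rabs (U k y) <= B k /\ Rabs (V k y) <= B k.
Proof.
  intros Hy.
  assert (Hcmod : cmod (U k y) (V k y) <= B k).
  { assert (0 < INR (Factorial.fact k) ^ 2) by (apply pow_lt, INR_fact_lt_0).
    assert (0 < sigma ^ k) by (apply pow_lt; lra).
    apply Rmult_le_reg_l with (sigma ^ k / INR (Factorial.fact k) ^ 2);
      [apply Rdiv_lt_0_compat; auto|].
    unfold B. replace (_ * (M * _ / _)) with M; [auto|].
    field. split; [lra|apply INR_fact_neq_0]. }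
  split; eapply Rle_trans; [apply Rabs_le_cmod_l|exact Hcmod|apply Rabs_le_cmod_r|exact Hcmod].
Qed.

Lemma exp_div_le_fact_div_pow m : (1 <= m)%nat ->
  exp (a * INR m / sigma) <= 2 * M * INR (Factorial.fact m) / INR m ^ m.
Proof.
  intros Hm.
  set (x := sigma / INR m).
  assert (Hm0 : 0 < INR m) by (apply lt_0_INR; lia).
  assert (Hx : 0 < x) by (apply Rdiv_lt_0_compat; lra).
  assert (Hw : forall y, 0 < y -> cmod (U 0 y) (V 0 y) = exp (a / y)).
  { intros y Hy. destruct (UV_0 y ltac:(lra)) as [-> ->]. apply cmod_w; auto. }
  destruct m as [|k]; [lia|].
  assert (HU := abs_le_pow_fact U (fun k y Hy => proj1 (UV_S k y Hy)) a a_neg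
    (fun y Hy => Rle_trans _ _ _ (Rabs_le_cmod_l _ _) (Req_le _ _ (Hw y Hy)))
    B (fun k y Hy => proj1 (Rabs_U_V_le k y Hy)) k x ltac:(lra)).
  assert (HV := abs_le_pow_fact V (fun k y Hy => proj2 (UV_S k y Hy)) a a_neg
    (fun y Hy => Rle_trans _ _ _ (Rabs_le_cmod_r _ _) (Req_le _ _ (Hw y Hy)))
    B (fun k y Hy => proj2 (Rabs_U_V_le k y Hy)) k x ltac:(lra)).
  replace (a * INR (S k) / sigma) with (a / x) by (unfold x; field; lra).
  rewrite <- Hw by auto.
  eapply Rle_trans; [apply cmod_le_Rabs_add|].
  replace (2 * M * INR (Factorial.fact (S k)) / INR (S k) ^ S k)
    with (2 * (B (S k) * pow_fact (S k) x)); [lra|].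
  assert (INR (Factorial.fact (S k)) <> 0) by apply INR_fact_neq_0.
  assert (0 < INR (S k) ^ S k) by (apply pow_lt; lra).
  assert (0 < sigma ^ S k) by (apply pow_lt; lra).
  unfold B, pow_fact, x, Rdiv. rewrite Rpow_mult_distr, pow_inv. field; lra.
Qed.

End DerivativesOfW.

Theorem lemmaA1 (a b sigma : R) (ha : a < 0) (hsigma : - a < sigma)
  (U V : nat -> R -> R)
  (H0 : forall x, 0 <= x -> U O x = w_re a b x /\ V O x = w_im a b x)
  (HS : forall (k : nat) (x : R), 0 <= x ->
          deriv_nonneg (U k) x (U (S k) x) /\ deriv_nonneg (V k) x (V (S k) x)) :
  forall M : R, exists (k : nat) (x : R), 0 <= x /\
    M < sigma ^ k / (INR (Factorial.fact k)) ^ 2 * cmod (U k x) (V k x).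
Proof.
  intros M. apply NNPP. intros Hnot.
  assert (Hsigma : 0 < sigma) by lra.
  assert (Hbound : forall k x, 0 <= x ->
            sigma ^ k / INR (Factorial.fact k) ^ 2 * cmod (U k x) (V k x) <= M).
  { intros k x Hx. apply Rnot_lt_le. intros Hlt. apply Hnot. exists k, x. auto. }
  apply (exp_not_linearly_bounded (1 + a / sigma) (2 * M * exp 1)).
  - apply Rmult_lt_reg_r with sigma; auto.
    replace ((1 + a / sigma) * sigma) with (sigma + a) by (field; lra). lra.
  - apply (exp_mul_le_of_fact_bound a sigma (2 * M) Hsigma).
    intros m Hm.
    exact (exp_div_le_fact_div_pow a b sigma M U V ha Hsigma H0 HS Hbound m Hm).
Qed.
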